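(* Let $V$ be a finite alphabet of tokens containing an end-of-sequence token, $x$ a prompt, and $p^{(1)},p^{(2)}$ two language models. Let $p$ be the fused model defined iteratively by $$p(\cdot\mid y_{<t},x)=\arg\min_{p^*}\max_{i\in\{1,2\}}\ \mathbb{E}_{y_t\sim p^*}\log\frac{p^*(y_t)\,p(y_{<t}\mid x)}{p^{(i)}(y_{\le t}\mid x)},$$ where $p^*$ ranges over probability distributions on $V$ and $p(y_{<t}\mid x)=\prod_{s<t}p(y_s\mid y_{<s},x)$. Let $y_{<t}$ be any non-ending sequence (containing no end-of-sequence token), and assume that $p^{(i)}(\cdot\mid y_{<t},x)$ has full support on $V$ for both $i\in\{1,2\}$ and that $p^{(1)}(y_{<t}\mid x)>p^{(2)}(y_{<t}\mid x)$. Then at least one of the following holds: 1. $\mathbb{E}_{y_t\sim p(\cdot\mid y_{<t},x)}\log p^{(1)}(y_{\le t}\mid x)=\mathbb{E}_{y_t\sim p(\cdot\mid y_{<t},x)}\log p^{(2)}(y_{\le t}\mid x)$; 2. $p(y_t\mid y_{<t},x)=p^{(2)}(y_t\mid y_{<t},x)$ for all $y_t\in V$.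
   Context: A language model $p$ maps a prompt $x$ to a distribution over token sequences $y_{0:T}$ over a finite alphabet $V$ (with $y_T$ the end-of-sequence token), factorized as $p(y_{0:T}\mid x)=\prod_{t=0}^T p(y_t\mid y_{<t},x)$ with $y_{<0}=\emptyset$; for a prefix, $p^{(i)}(y_{\le t}\mid x)=\prod_{s\le t}p^{(i)}(y_s\mid y_{<s},x)$. The minimization defining $p(\cdot\mid y_{<t},x)$ is equivalent to minimizing $s$ over $(p^*,s)$ subject to $\mathrm{KL}(p^*\|p^{(i)}(\cdot\mid y_{<t},x))+\log\frac{p(y_{<t}\mid x)}{p^{(i)}(y_{<t}\mid x)}\le s$ for $i=1,2$, where $\mathrm{KL}$ is the Kullback–Leibler divergence. *)

From HB Require Import structures.
From mathcomp Require Import all_boot all_order all_algebra.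
From mathcomp Require Import all_classical all_reals all_analysis.
Set Implicit Arguments. Unset Strict Implicit. Unset Printing Implicit Defensive.
Import Order.TTheory GRing.Theory Num.Theory.
Local Open Scope ring_scope.

Section LM.
Variables (R : realType) (V : finType) (X : Type).

(* A (conditional) language model: p x s v = p(v | s, x). *)
Definition model := X -> seq V -> V -> R.

Definition is_dist (q : V -> R) : Prop :=
  (forall v, 0 <= q v) /\ \sum_(v : V) q v = 1.

Definition nonending (eos : V) (s : seq V) : bool := eos \notin s.

Definition is_LM (eos : V) (p : model) : Prop :=
  forall x s, nonending eos s -> is_dist (p x s).

Definition pref (eos : V) (p : model) (x : X) (s : seq V) : R :=
  \prod_(i < size s) p x (take i s) (nth eos s i).

Definition fuse_obj (eos : V) (p pi : model) (x : X) (s : seq V)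
    (pstar : V -> R) : R :=
  \sum_(v : V) pstar v *
     ln (pstar v * pref eos p x s / pref eos pi x (rcons s v)).

Definition fuse_max (eos : V) (p p1 p2 : model) (x : X) (s : seq V)
    (pstar : V -> R) : R :=
  Num.max (fuse_obj eos p p1 x s pstar) (fuse_obj eos p p2 x s pstar).

Definition is_fused (eos : V) (p1 p2 p : model) (x : X) : Prop :=
  forall s, nonending eos s ->
    is_dist (p x s) /\
    forall pstar, is_dist pstar ->
      fuse_max eos p p1 p2 x s (p x s) <= fuse_max eos p p1 p2 x s pstar.

End LM.

(* On distributions q, the i-th objective equals KL(q || p_i) + c_i with
   c_i = ln p(y_<t) - ln p_i(y_<t), so both objectives are convex and
   c_1 < c_2.  At a minimiser of the maximum of two convex functions, a
   strictly larger one must itself be minimised there (otherwise a small step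
   towards a better point lowers both).  If objective 1 were strictly larger
   at p(.|y_<t), its value would be at most c_1 < c_2 <= objective 2, absurd.
   If objective 2 is strictly larger, its value is at most c_2, which forces
   KL(p(.|y_<t) || p_2) = 0.  Equal objectives is the first alternative. *)
From HB Require Import structures.
From mathcomp Require Import all_boot all_order all_algebra.
From mathcomp Require Import all_classical all_reals all_analysis.
From mathcomp Require Import ring lra.
Set Implicit Arguments. Unset Strict Implicit. Unset Printing Implicit Defensive.
Import Order.TTheory GRing.Theory Num.Theory.
Local Open Scope ring_scope.

Section RealInequalities.
Variable R : realType.

Definition relent (x z : R) : R := x * ln x - x * ln z - x + z.

Lemma relent_ge0 x z : 0 <= x -> 0 < z -> 0 <= relent x z.
Proof.
rewrite /relent le_eqVlt => /orP[/eqP<-|x_gt0] z_gt0; first by rewrite !mul0r; lra.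
have := expR_ge1Dx (ln (z / x)).
rewrite lnK ?posrE ?divr_gt0 // ln_div ?posrE // => le_exp.
have : x * (1 + (ln z - ln x)) <= x * (z / x) by rewrite ler_pM2l.
rewrite mulrCA divff ?mulr1 ?gt_eqF //; lra.
Qed.

Lemma relent_eq0 x z : 0 <= x -> 0 < z -> relent x z = 0 -> x = z.
Proof.
rewrite /relent le_eqVlt => /orP[/eqP<-|x_gt0] z_gt0; first by rewrite !mul0r; lra.
move=> relent0; apply/eqP; apply: contraT => neq_xz.
have ln_neq0 : ln (z / x) != 0.
  rewrite ln_eq0 ?divr_gt0 //; apply: contra neq_xz => /eqP zx1.
  by rewrite -[z](divfK (lt0r_neq0 x_gt0)) zx1 mul1r.
have := expR_gt1Dx ln_neq0.
rewrite lnK ?posrE ?divr_gt0 // ln_div ?posrE // => lt_exp.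
have : x * (1 + (ln z - ln x)) < x * (z / x) by rewrite ltr_pM2l.
rewrite mulrCA divff ?mulr1 ?gt_eqF //; lra.
Qed.

(* Apply the tangent-line bound [relent _ z >= 0] at the mixture [z] itself. *)
Lemma xlnx_convex (x y t : R) : 0 <= x -> 0 <= y -> 0 <= t <= 1 ->
  ((1 - t) * x + t * y) * ln ((1 - t) * x + t * y)
   <= (1 - t) * (x * ln x) + t * (y * ln y).
Proof.
move=> x_ge0 y_ge0 /andP[t_ge0 t_le1].
have ax_ge0 : 0 <= (1 - t) * x by apply: mulr_ge0 => //; lra.
have ty_ge0 : 0 <= t * y by apply: mulr_ge0.
set z := (1 - t) * x + t * y.
have : 0 <= z by rewrite /z; lra.
rewrite le_eqVlt => /orP[/eqP z0|z_gt0].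
  have ax0 : (1 - t) * x = 0 by rewrite /z in z0; lra.
  have ty0 : t * y = 0 by rewrite /z in z0; lra.
  by rewrite -z0 mul0r !mulrA ax0 ty0 !mul0r addr0.
have hx : 0 <= (1 - t) * relent x z by apply: mulr_ge0; [lra | exact: relent_ge0].
have hy : 0 <= t * relent y z by apply: mulr_ge0; [lra | exact: relent_ge0].
rewrite /relent in hx hy.
have -> : z * ln z = (1 - t) * x * ln z + t * y * ln z by rewrite -mulrDl.
have defz : z = (1 - t) * x + t * y by [].
nra.
Qed.

(* The step size [t] keeps [t * (w2 - u2)] below the gap [u1 - u2]. *)
Lemma exists_mix_lt (u1 u2 w1 w2 : R) : u2 < u1 -> w1 < u1 ->
  exists t, [/\ 0 < t, t <= 1, (1 - t) * u1 + t * w1 < u1 &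
                (1 - t) * u2 + t * w2 < u1].
Proof.
move=> lt_u lt_w1.
set d := u1 - u2; set g := w2 - u2.
have d_gt0 : 0 < d by rewrite /d; lra.
have dg_gt0 : 0 < d + `|g| by have := normr_ge0 g; lra.
have t_gt0 : 0 < d / (d + `|g|) by rewrite divr_gt0.
exists (d / (d + `|g|)); split => //.
- by rewrite ler_pdivrMr // mul1r; have := normr_ge0 g; lra.
- have : 0 < d / (d + `|g|) * (u1 - w1) by apply: mulr_gt0; lra.
  lra.
- have tg_le : d / (d + `|g|) * g <= d / (d + `|g|) * `|g|.
    by rewrite ler_pM2l // ler_norm.
  have : d / (d + `|g|) * `|g| < d.
    by rewrite mulrAC ltr_pdivrMr // ltr_pM2l //; lra.
  rewrite /g /d in tg_le * => tg_lt; lra.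
Qed.

End RealInequalities.

Section Distributions.
Variables (R : realType) (V : finType).

Definition mix (q r : V -> R) (t : R) : V -> R := fun v => (1 - t) * q v + t * r v.

Lemma mix_dist q r t : is_dist q -> is_dist r -> 0 <= t <= 1 -> is_dist (mix q r t).
Proof.
move=> [q_ge0 q_sum1] [r_ge0 r_sum1] /andP[t_ge0 t_le1]; split.
  by move=> v; rewrite /mix; apply: addr_ge0; apply: mulr_ge0 => //; lra.
by rewrite /mix big_split /= -!mulr_sumr q_sum1 r_sum1; lra.
Qed.

Definition convex_dist (F : (V -> R) -> R) : Prop :=
  forall q r t, is_dist q -> is_dist r -> 0 <= t <= 1 ->
    F (mix q r t) <= (1 - t) * F q + t * F r.

Lemma min_max_dominant (F G : (V -> R) -> R) p :
  convex_dist F -> convex_dist G -> is_dist p ->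
  (forall q, is_dist q -> Num.max (F p) (G p) <= Num.max (F q) (G q)) ->
  G p < F p -> forall r, is_dist r -> F p <= F r.
Proof.
move=> convF convG dp p_min lt_GF r dr; rewrite leNgt; apply/negP => lt_Fr.
have [t [t_gt0 t_le1 ltF ltG]] := exists_mix_lt (G r) lt_GF lt_Fr.
have t01 : 0 <= t <= 1 by rewrite ltW.
have := p_min _ (mix_dist dp dr t01).
rewrite (max_idPl (ltW lt_GF)) le_max => /orP[].
- by have := convF _ _ _ dp dr t01; lra.
- by have := convG _ _ _ dp dr t01; lra.
Qed.

(* The terms [- q v + c v] cancel on distributions, leaving KL(q || c). *)
Definition kl (q c : V -> R) : R := \sum_(v : V) relent (q v) (c v).

Lemma kl_ge0 q c : (forall v, 0 <= q v) -> (forall v, 0 < c v) -> 0 <= kl q c.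
Proof. by move=> q_ge0 c_gt0; apply: sumr_ge0 => v _; apply: relent_ge0. Qed.

Lemma kl_self c : kl c c = 0.
Proof. by apply: big1 => v _; rewrite /relent; lra. Qed.

Lemma kl_eq0 q c : (forall v, 0 <= q v) -> (forall v, 0 < c v) ->
  kl q c = 0 -> forall v, q v = c v.
Proof.
move=> q_ge0 c_gt0 /eqP; rewrite psumr_eq0 => [/allP kl0 v|v _]; last first.
  exact: relent_ge0.
by apply: relent_eq0 => //; apply/eqP/kl0; rewrite mem_index_enum.
Qed.

Lemma kl_convex c : convex_dist (kl ^~ c).
Proof.
move=> q r t [q_ge0 _] [r_ge0 _] t01; rewrite /kl !mulr_sumr -big_split /=.
apply: ler_sum => v _; rewrite /relent /mix.
have := xlnx_convex (q_ge0 v) (r_ge0 v) t01.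
set z := (1 - t) * q v + t * r v => convz.
have -> : z * ln (c v) = (1 - t) * (q v * ln (c v)) + t * (r v * ln (c v))
  by rewrite /z; ring.
rewrite /z in convz *; lra.
Qed.

End Distributions.

Lemma pref_rcons (R : realType) (V : finType) (X : Type) (eos : V)
    (p : model R V X) x s v :
  pref eos p x (rcons s v) = pref eos p x s * p x s v.
Proof.
rewrite /pref size_rcons big_ord_recr /= -cats1; congr (_ * _).
  by apply: eq_bigr => i _; rewrite take_cat nth_cat ltn_ord.
by rewrite take_cat ltnn subnn take0 cats0 nth_cat ltnn subnn.
Qed.

Section FusionObjective.
Variables (R : realType) (V : finType) (X : Type) (eos : V).
Variables (p pi : model R V X) (x : X) (s : seq V).
Hypotheses (pi_gt0 : forall v, 0 < pi x s v) (pref_pi_gt0 : 0 < pref eos pi x s).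
Hypothesis pref_p_gt0 : 0 < pref eos p x s.

Lemma fuse_objE q : is_dist q ->
  fuse_obj eos p pi x s q =
    \sum_(v : V) (q v * ln (q v) + q v * ln (pref eos p x s))
    - \sum_(v : V) q v * ln (pref eos pi x (rcons s v)).
Proof.
move=> [q_ge0 _]; rewrite /fuse_obj -sumrB; apply: eq_bigr => v _.
have := q_ge0 v; rewrite le_eqVlt => /orP[/eqP<-|qv_gt0]; first by rewrite !mul0r; lra.
have pref_gt0 : 0 < pref eos pi x (rcons s v) by rewrite pref_rcons mulr_gt0.
by rewrite ln_div ?lnM ?posrE ?mulr_gt0 //; ring.
Qed.

Lemma fuse_obj_kl q : is_dist (pi x s) -> is_dist q ->
  fuse_obj eos p pi x s q =
    kl q (pi x s) + (ln (pref eos p x s) - ln (pref eos pi x s)).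
Proof.
move=> [_ pi_sum1] dq; rewrite fuse_objE // -sumrB; case: dq => _ q_sum1.
set C := ln (pref eos p x s) - ln (pref eos pi x s).
have -> : C = \sum_(v : V) q v * C + \sum_(v : V) (q v - pi x s v).
  by rewrite -mulr_suml q_sum1 sumrB q_sum1 pi_sum1; ring.
rewrite /kl -!big_split /=; apply: eq_bigr => v _.
by rewrite pref_rcons lnM ?posrE // /relent /C; ring.
Qed.

Lemma fuse_obj_convex : is_dist (pi x s) -> convex_dist (fuse_obj eos p pi x s).
Proof.
move=> dpi q r t dq dr t01; rewrite !fuse_obj_kl //; last exact: mix_dist.
by have := kl_convex (pi x s) dq dr t01; lra.
Qed.

End FusionObjective.

Theorem lemma4p2 (R : realType) (V : finType) (X : Type) (eos : V)
    (p1 p2 p : model R V X) (x : X) (s : seq V) :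
  is_LM eos p1 -> is_LM eos p2 ->
  is_fused eos p1 p2 p x ->
  nonending eos s ->
  (forall v, 0 < p1 x s v) -> (forall v, 0 < p2 x s v) ->
  pref eos p2 x s < pref eos p1 x s ->
  0 < pref eos p2 x s -> 0 < pref eos p x s ->
  (\sum_(v : V) p x s v * ln (pref eos p1 x (rcons s v)) =
   \sum_(v : V) p x s v * ln (pref eos p2 x (rcons s v)))
  \/ (forall v, p x s v = p2 x s v).
Proof.
move=> LM1 LM2 fused ns p1_gt0 p2_gt0 lt_pref pref2_gt0 pref_gt0.
have pref1_gt0 := lt_trans pref2_gt0 lt_pref.
have d1 := LM1 x s ns; have d2 := LM2 x s ns; have [dp p_min] := fused s ns.
have K1 := fuse_obj_kl p1_gt0 pref1_gt0 pref_gt0 d1.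
have K2 := fuse_obj_kl p2_gt0 pref2_gt0 pref_gt0 d2.
have conv1 := fuse_obj_convex p1_gt0 pref1_gt0 pref_gt0 d1.
have conv2 := fuse_obj_convex p2_gt0 pref2_gt0 pref_gt0 d2.
have lt_ln : ln (pref eos p2 x s) < ln (pref eos p1 x s) by rewrite ltr_ln ?posrE.
have kl_p2_ge0 := kl_ge0 dp.1 p2_gt0.
set f1 := fuse_obj eos p p1 x s in K1 conv1 p_min *.
set f2 := fuse_obj eos p p2 x s in K2 conv2 p_min *.
case: (ltgtP (f1 (p x s)) (f2 (p x s))).
- move=> lt12; right; apply: kl_eq0 dp.1 p2_gt0 _.
  have p_min21 q : is_dist q -> Num.max (f2 (p x s)) (f1 (p x s)) <= Num.max (f2 q) (f1 q).
    by move=> dq; rewrite maxC [leRHS]maxC; apply: p_min.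
  have := min_max_dominant conv2 conv1 dp p_min21 lt12 d2.
  by rewrite !K2 // kl_self; lra.
- move=> lt21; exfalso.
  have := min_max_dominant conv1 conv2 dp p_min lt21 d1.
  by move: lt21; rewrite !K1 // K2 // kl_self; lra.
- rewrite /f1 /f2 (fuse_objE p1_gt0 pref1_gt0 pref_gt0 dp).
  by rewrite (fuse_objE p2_gt0 pref2_gt0 pref_gt0 dp) => /addrI/oppr_inj; left.
Qed.
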